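(* In continuous time, suppose $\pi_0(1|B)\le\pi_0(1|A)$, and one of the following is applied at all times: the unconstrained policy UN, the AA1 policy, or the AA2 policy. Then $\pi_t(1|B)\le\pi_t(1|A)$ for all $t\ge0$ (the initial advantage is preserved).
   Context: Two groups $A,B$; $\neg j$ is the other group. Group $j$ has qualification profile $\pi_t(1|j)\in[0,1]$, $\pi_t(0|j)=1-\pi_t(1|j)$. Selection rates of a policy $\tau$: $\beta_t(v;j)=\tau(v;j)\pi_t(v|j)$. Dynamics: continuously differentiable $f_0,f_1:[0,1]^2\to[0,1]$; continuous time: $\frac{d}{dt}\pi_t(1|j)=\pi_t(1|j)\big(f_1(\beta_t(0;j),\beta_t(1;j))-1\big)+(1-\pi_t(1|j))f_0(\beta_t(0;j),\beta_t(1;j))$, with the policy at time $t$ determined by the current profiles. UN: $\tau(1;j)=1,\tau(0;j)=0$, selection rates $(0,\pi_t(1|j))$. Group $j$ is advantaged at $t$ if $\pi_t(1|j)\ge\pi_t(1|\neg j)$. AA1 w.r.t. advantaged $j$: selection rates $\beta_t(0;j)=\beta_t(0;\neg j)=0$, $\beta_t(1;j)=\beta_t(1;\neg j)=\pi_t(1|\neg j)$ (i.e. $\tau(1;j)=\pi_t(1|\neg j)/\pi_t(1|j)$, $\tau(1;\neg j)=1$, $\tau(0;\cdot)=0$). AA2 w.r.t. advantaged $j$: $\beta_t(0;j)=0$, $\beta_t(1;j)=\pi_t(1|j)$, $\beta_t(0;\neg j)=\pi_t(1|j)-\pi_t(1|\neg j)$, $\beta_t(1;\neg j)=\pi_t(1|\neg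 j)$ (i.e. $\tau(1;\cdot)=1$, $\tau(0;j)=0$, $\tau(0;\neg j)=(\pi_t(1|j)-\pi_t(1|\neg j))/(1-\pi_t(1|\neg j))$). ''Applied at all times'' means at each $t$ the policy is taken with respect to the group advantaged at time $t$. *)

From Stdlib Require Import Reals Lra.
Open Scope R_scope.

Definition in_sq (x y : R) : Prop := 0 <= x <= 1 /\ 0 <= y <= 1.

Definition maps_sq_to_unit (f : R -> R -> R) : Prop :=
  forall x y, in_sq x y -> 0 <= f x y <= 1.

Definition cont_on_sq (g : R -> R -> R) : Prop :=
  forall x y, in_sq x y -> forall eps, eps > 0 -> exists delta, delta > 0 /\
    forall x' y', in_sq x' y' -> Rabs (x' - x) < delta -> Rabs (y' - y) < delta ->
      Rabs (g x' y' - g x y) < eps.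

Definition C1_on_sq (f : R -> R -> R) : Prop :=
  exists D1 D2 : R -> R -> R,
    (forall x y, in_sq x y -> forall eps, eps > 0 -> exists delta, delta > 0 /\
       forall x' y', in_sq x' y' -> Rabs (x' - x) < delta -> Rabs (y' - y) < delta ->
         Rabs (f x' y' - f x y - D1 x y * (x' - x) - D2 x y * (y' - y))
           <= eps * Rmax (Rabs (x' - x)) (Rabs (y' - y)))
    /\ cont_on_sq D1 /\ cont_on_sq D2.

Inductive policy : Type := UN | AA1 | AA2.

(* Selection rates (beta(0), beta(1)) of the advantaged group, given its own
   qualification profile [own] and that of the other group [other]. *)
Definition adv_rates (pol : policy) (own other : R) : R * R :=
  match pol with
  | UN => (0, own)
  | AA1 => (0, other)
  | AA2 => (0, own)
  end.

Definition disadv_rates (pol : policy) (own other : R) : R * R :=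
  match pol with
  | UN => (0, own)
  | AA1 => (0, own)
  | AA2 => (other - own, own)
  end.

(* Rates of group A and group B when the profiles are (pA, pB); the policy is
   taken w.r.t. the group advantaged at that moment (A if pA >= pB; at a tie
   both choices give the same rates). *)
Definition rates_A (pol : policy) (pA pB : R) : R * R :=
  if Rle_dec pB pA then adv_rates pol pA pB else disadv_rates pol pA pB.

Definition rates_B (pol : policy) (pA pB : R) : R * R :=
  if Rle_dec pB pA then disadv_rates pol pB pA else adv_rates pol pB pA.

Definition dyn (f0 f1 : R -> R -> R) (p : R) (b : R * R) : R :=
  p * (f1 (fst b) (snd b) - 1) + (1 - p) * f0 (fst b) (snd b).

Definition right_cont_0 (p : R -> R) : Prop :=
  forall eps, eps > 0 -> exists delta, delta > 0 /\
    forall t, 0 <= t < delta -> Rabs (p t - p 0) < eps.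

From Stdlib Require Import Reals Lra.
Open Scope R_scope.

(* While B is ahead, under each of UN, AA1 and AA2 the selection rates of the
   two groups differ by O(pB - pA), and f0, f1 are locally Lipschitz on the
   square, so the gap d = pA - pB satisfies d' >= L d near any tie.  If d
   became negative, a Gronwall argument started at the last zero of d before
   that time would contradict it. *)

Definition rel_deriv_on (P : R -> Prop) (phi phi' : R -> R) : Prop :=
  forall u, P u -> forall eps, eps > 0 -> exists delta, delta > 0 /\
    forall v, P v -> Rabs (v - u) < delta ->
      Rabs (phi v - phi u - phi' u * (v - u)) <= eps * Rabs (v - u).

Lemma rel_deriv_on_subset (P Q : R -> Prop) (phi phi' : R -> R) :
  (forall u, Q u -> P u) -> rel_deriv_on P phi phi' -> rel_deriv_on Q phi phi'.
Proof.
  intros QP Hd u Qu eps Heps.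
  destruct (Hd u (QP u Qu) eps Heps) as [delta [Hdelta Hv]].
  exists delta; split; [exact Hdelta|]. intros v Qv. exact (Hv v (QP v Qv)).
Qed.

Lemma rel_deriv_on_cont (P : R -> Prop) (phi phi' : R -> R) (u : R) :
  rel_deriv_on P phi phi' -> P u -> forall eps, eps > 0 -> exists delta, delta > 0 /\
    forall v, P v -> Rabs (v - u) < delta -> Rabs (phi v - phi u) < eps.
Proof.
  intros Hd Pu eps Heps.
  set (K := Rabs (phi' u) + 1).
  assert (HK : 0 < K) by (unfold K; pose proof (Rabs_pos (phi' u)); lra).
  destruct (Hd u Pu 1 ltac:(lra)) as [delta [Hdelta Hv]].
  exists (Rmin delta (eps / K)); split; [apply Rmin_pos; [lra | apply Rdiv_lt_0_compat; lra]|].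
  intros v Pv Hvu.
  pose proof (Hv v Pv (Rlt_le_trans _ _ _ Hvu (Rmin_l _ _))) as Hlin.
  assert (Hsmall : Rabs (v - u) * K < eps).
  { apply (Rmult_lt_reg_r (/ K)); [apply Rinv_0_lt_compat; lra|].
    rewrite Rmult_assoc, Rinv_r by lra.
    pose proof (Rlt_le_trans _ _ _ Hvu (Rmin_r _ _)). unfold Rdiv in *. lra. }
  assert (Hlin' : Rabs (phi' u * (v - u)) <= Rabs (phi' u) * Rabs (v - u))
    by (rewrite Rabs_mult; lra).
  unfold K in Hsmall. split_Rabs; nra.
Qed.

Lemma rel_deriv_on_interior (phi phi' : R -> R) (a b u : R) :
  rel_deriv_on (fun v => a <= v <= b) phi phi' -> a < u < b ->
  derivable_pt_lim phi u (phi' u).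
Proof.
  intros Hd Hu eps Heps.
  destruct (Hd u ltac:(lra) (eps / 2) ltac:(lra)) as [delta [Hdelta Hv]].
  assert (Hpos : 0 < Rmin delta (Rmin (u - a) (b - u))) by (repeat apply Rmin_pos; lra).
  exists (mkposreal _ Hpos); simpl. intros h Hh0 Hh.
  pose proof (Rmin_l delta (Rmin (u - a) (b - u))).
  pose proof (Rmin_r delta (Rmin (u - a) (b - u))).
  pose proof (Rmin_l (u - a) (b - u)). pose proof (Rmin_r (u - a) (b - u)).
  assert (Hlin : Rabs (phi (u + h) - phi u - phi' u * h) <= eps / 2 * Rabs h).
  { replace h with (u + h - u) at 2 3 by ring. apply Hv; split_Rabs; lra. }
  assert (Hh' : 0 < Rabs h) by (apply Rabs_pos_lt; exact Hh0).
  replace ((phi (u + h) - phi u) / h - phi' u) with ((phi (u + h) - phi u - phi' u * h) / h)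
    by (field; exact Hh0).
  unfold Rdiv. rewrite Rabs_mult, Rabs_inv.
  apply (Rmult_le_compat_r (/ Rabs h)) in Hlin; [|left; apply Rinv_0_lt_compat; lra].
  rewrite Rmult_assoc, Rinv_r in Hlin by lra. lra.
Qed.

(* Mean value inequality with only one-sided derivatives at the endpoints:
   apply the classical one on a slightly smaller interval [a', b'] and close
   the gaps by continuity. *)
Lemma rel_deriv_on_interval_bound (phi phi' : R -> R) (a b K : R) :
  a <= b -> rel_deriv_on (fun v => a <= v <= b) phi phi' ->
  (forall u, a <= u <= b -> Rabs (phi' u) <= K) ->
  Rabs (phi b - phi a) <= K * (b - a).
Proof.
  intros Hab Hd HK.
  destruct (Req_dec a b) as [<-|Hne].
  { replace (phi a - phi a) with 0 by ring. rewrite Rabs_R0. lra. }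
  apply Rle_plus_epsilon. intros eps Heps.
  destruct (rel_deriv_on_cont _ _ _ a Hd ltac:(lra) (eps / 2) ltac:(lra)) as [da [Hda Ha]].
  destruct (rel_deriv_on_cont _ _ _ b Hd ltac:(lra) (eps / 2) ltac:(lra)) as [db [Hdb Hb]].
  set (w := Rmin (Rmin da db) ((b - a) / 3) / 2).
  assert (Hw : 0 < w /\ w < da /\ w < db /\ w < (b - a) / 3).
  { unfold w. pose proof (Rmin_l (Rmin da db) ((b - a) / 3)).
    pose proof (Rmin_r (Rmin da db) ((b - a) / 3)).
    pose proof (Rmin_l da db). pose proof (Rmin_r da db).
    assert (0 < Rmin (Rmin da db) ((b - a) / 3)) by (repeat apply Rmin_pos; lra). lra. }
  destruct (MVT_cor2 phi phi' (a + w) (b - w) ltac:(lra)) as [z [Hz Hzin]].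
  { intros c Hc. apply (rel_deriv_on_interior _ _ a b); [exact Hd | lra]. }
  specialize (Ha (a + w) ltac:(lra) ltac:(split_Rabs; lra)).
  specialize (Hb (b - w) ltac:(lra) ltac:(split_Rabs; lra)).
  assert (Hmid : Rabs (phi (b - w) - phi (a + w)) <= K * (b - a)).
  { rewrite Hz, Rabs_mult, (Rabs_right (b - w - (a + w))) by lra.
    pose proof (HK z ltac:(lra)). pose proof (Rabs_pos (phi' z)). nra. }
  split_Rabs; lra.
Qed.

Lemma rel_deriv_on_lipschitz (P : R -> Prop) (phi phi' : R -> R) (K : R) :
  (forall a b u, P a -> P b -> a <= u <= b -> P u) ->
  rel_deriv_on P phi phi' -> (forall u, P u -> Rabs (phi' u) <= K) ->
  forall a b, P a -> P b -> Rabs (phi b - phi a) <= K * Rabs (b - a).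
Proof.
  intros Hconv Hd HK.
  assert (Hle : forall a b, P a -> P b -> a <= b -> Rabs (phi b - phi a) <= K * Rabs (b - a)).
  { intros a b Pa Pb Hab. rewrite (Rabs_right (b - a)) by lra.
    apply (rel_deriv_on_interval_bound phi phi'); [exact Hab| |].
    - apply (rel_deriv_on_subset P); [|exact Hd]. intros u Hu. exact (Hconv a b u Pa Pb Hu).
    - intros u Hu. exact (HK u (Hconv a b u Pa Pb Hu)). }
  intros a b Pa Pb. destruct (Rle_dec a b) as [Hab|Hba]; [exact (Hle a b Pa Pb Hab)|].
  rewrite Rabs_minus_sym, (Rabs_minus_sym b a). apply Hle; [exact Pb | exact Pa | lra].
Qed.

Definition lipschitz_near (f : R -> R -> R) (x0 y0 r L : R) : Prop :=
  forall x y x' y', in_sq x y -> in_sq x' y' ->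
    Rabs (x - x0) < r -> Rabs (x' - x0) < r -> Rabs (y - y0) < r -> Rabs (y' - y0) < r ->
    Rabs (f x' y' - f x y) <= L * (Rabs (x' - x) + Rabs (y' - y)).

Section C1_on_square.

Variables f D1 D2 : R -> R -> R.

Hypothesis f_frechet : forall x y, in_sq x y -> forall eps, eps > 0 -> exists delta, delta > 0 /\
  forall x' y', in_sq x' y' -> Rabs (x' - x) < delta -> Rabs (y' - y) < delta ->
    Rabs (f x' y' - f x y - D1 x y * (x' - x) - D2 x y * (y' - y))
      <= eps * Rmax (Rabs (x' - x)) (Rabs (y' - y)).

Hypotheses (D1_cont : cont_on_sq D1) (D2_cont : cont_on_sq D2).

Lemma frechet_partial_x (y : R) (P : R -> Prop) :
  0 <= y <= 1 -> (forall v, P v -> 0 <= v <= 1) ->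
  rel_deriv_on P (fun v => f v y) (fun v => D1 v y).
Proof.
  intros Hy HP u Pu eps Heps.
  destruct (f_frechet u y (conj (HP u Pu) Hy) eps Heps) as [delta [Hdelta Hv]].
  exists delta; split; [exact Hdelta|]. intros v Pv Hvu.
  assert (Hyy : Rabs (y - y) = 0) by (rewrite Rminus_diag; exact Rabs_R0).
  specialize (Hv v y (conj (HP v Pv) Hy) Hvu ltac:(lra)).
  rewrite Hyy, Rmax_left in Hv by apply Rabs_pos.
  rewrite Rminus_diag, Rmult_0_r, Rminus_0_r in Hv. exact Hv.
Qed.

Lemma frechet_partial_y (x : R) (P : R -> Prop) :
  0 <= x <= 1 -> (forall v, P v -> 0 <= v <= 1) ->
  rel_deriv_on P (fun v => f x v) (fun v => D2 x v).
Proof.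
  intros Hx HP u Pu eps Heps.
  destruct (f_frechet x u (conj Hx (HP u Pu)) eps Heps) as [delta [Hdelta Hv]].
  exists delta; split; [exact Hdelta|]. intros v Pv Hvu.
  assert (Hxx : Rabs (x - x) = 0) by (rewrite Rminus_diag; exact Rabs_R0).
  specialize (Hv x v (conj Hx (HP v Pv)) ltac:(lra) Hvu).
  rewrite Hxx, Rmax_right in Hv by apply Rabs_pos.
  rewrite Rminus_diag, Rmult_0_r, Rminus_0_r in Hv. exact Hv.
Qed.

Lemma frechet_lipschitz_near (x0 y0 : R) :
  in_sq x0 y0 -> exists r L, r > 0 /\ 0 <= L /\ lipschitz_near f x0 y0 r L.
Proof.
  intros Hsq.
  destruct (D1_cont x0 y0 Hsq 1 ltac:(lra)) as [r1 [Hr1 HD1]].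
  destruct (D2_cont x0 y0 Hsq 1 ltac:(lra)) as [r2 [Hr2 HD2]].
  pose proof (Rmin_l r1 r2). pose proof (Rmin_r r1 r2).
  pose proof (Rmax_l (Rabs (D1 x0 y0)) (Rabs (D2 x0 y0))).
  pose proof (Rmax_r (Rabs (D1 x0 y0)) (Rabs (D2 x0 y0))).
  set (r := Rmin r1 r2) in *.
  set (K := Rmax (Rabs (D1 x0 y0)) (Rabs (D2 x0 y0)) + 1).
  pose proof (Rabs_pos (D1 x0 y0)).
  exists r, K. split; [apply Rmin_pos; lra|]. split; [unfold K; lra|].
  intros x y x' y' Sxy Sxy' Hx Hx' Hy Hy'.
  set (near c := fun v => 0 <= v <= 1 /\ Rabs (v - c) < r).
  assert (near_conv : forall c a b u, near c a -> near c b -> a <= u <= b -> near c u)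
    by (unfold near; intros c a b u Ha Hb Hu; split; split_Rabs; lra).
  assert (Hhor : Rabs (f x' y' - f x y') <= K * Rabs (x' - x)).
  { apply (rel_deriv_on_lipschitz (near x0) (fun v => f v y') (fun v => D1 v y'));
      [apply near_conv | apply frechet_partial_x | | |].
    - apply Sxy'.
    - intros v Hv; apply Hv.
    - intros u [Hu Hur]. pose proof (HD1 u y' (conj Hu (proj2 Sxy')) ltac:(lra) ltac:(lra)).
      unfold K. split_Rabs; lra.
    - split; [apply Sxy | exact Hx].
    - split; [apply Sxy' | exact Hx']. }
  assert (Hver : Rabs (f x y' - f x y) <= K * Rabs (y' - y)).
  { apply (rel_deriv_on_lipschitz (near y0) (fun v => f x v) (fun v => D2 x v));
      [apply near_conv | apply frechet_partial_y | | |].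
    - apply Sxy.
    - intros v Hv; apply Hv.
    - intros u [Hu Hur]. pose proof (HD2 x u (conj (proj1 Sxy) Hu) ltac:(lra) ltac:(lra)).
      unfold K. split_Rabs; lra.
    - split; [apply Sxy | exact Hy].
    - split; [apply Sxy' | exact Hy']. }
  pose proof (Rabs_triang (f x' y' - f x y') (f x y' - f x y)).
  replace (f x' y' - f x y' + (f x y' - f x y)) with (f x' y' - f x y) in * by ring.
  lra.
Qed.

End C1_on_square.

Lemma C1_on_sq_lipschitz_near (f : R -> R -> R) (x0 y0 : R) :
  C1_on_sq f -> in_sq x0 y0 -> exists r L, r > 0 /\ 0 <= L /\ lipschitz_near f x0 y0 r L.
Proof.
  intros [D1 [D2 [Hfrechet [HD1 HD2]]]]. exact (frechet_lipschitz_near f D1 D2 Hfrechet HD1 HD2 x0 y0).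
Qed.

Lemma rates_between (pol : policy) (p q : R) (b : R * R) :
  p < q -> b = rates_A pol p q \/ b = rates_B pol p q ->
  0 <= fst b <= q - p /\ p <= snd b <= q.
Proof.
  intros Hpq Hb. unfold rates_A, rates_B in Hb.
  destruct (Rle_dec q p); [lra|].
  destruct pol, Hb as [->| ->]; simpl; lra.
Qed.

Lemma dyn_sub_ge (f0 f1 : R -> R -> R) (p q M : R) (b b' : R * R) :
  0 <= p < q -> q <= 1 -> 0 <= M ->
  0 <= f0 (fst b) (snd b) <= 1 -> 0 <= f1 (fst b) (snd b) <= 1 ->
  Rabs (f0 (fst b) (snd b) - f0 (fst b') (snd b')) <= M * (q - p) ->
  Rabs (f1 (fst b) (snd b) - f1 (fst b') (snd b')) <= M * (q - p) ->
  dyn f0 f1 p b - dyn f0 f1 q b' >= M * (p - q).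
Proof.
  intros Hpq Hq HM H0 H1 Hd0 Hd1. unfold dyn.
  set (A0 := f0 (fst b) (snd b)) in *. set (A1 := f1 (fst b) (snd b)) in *.
  set (B0 := f0 (fst b') (snd b')) in *. set (B1 := f1 (fst b') (snd b')) in *.
  assert (HA1B1 : - (M * (q - p)) <= A1 - B1) by (split_Rabs; lra).
  assert (HA0B0 : - (M * (q - p)) <= A0 - B0) by (split_Rabs; lra).
  nra.
Qed.

Lemma dyn_gap_near_tie (f0 f1 : R -> R -> R) (pol : policy) (p0 : R) :
  C1_on_sq f0 -> C1_on_sq f1 -> maps_sq_to_unit f0 -> maps_sq_to_unit f1 ->
  0 <= p0 <= 1 ->
  exists r L, r > 0 /\ 0 <= L /\ forall p q, 0 <= p -> q <= 1 ->
    Rabs (p - p0) < r -> Rabs (q - p0) < r -> p < q ->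
    dyn f0 f1 p (rates_A pol p q) - dyn f0 f1 q (rates_B pol p q) >= L * (p - q).
Proof.
  intros C0 C1 M0 M1 Hp0.
  assert (S0 : in_sq 0 p0) by (unfold in_sq; lra).
  destruct (C1_on_sq_lipschitz_near f0 0 p0 C0 S0) as [r0 [L0 [Hr0 [HL0 Lip0]]]].
  destruct (C1_on_sq_lipschitz_near f1 0 p0 C1 S0) as [r1 [L1 [Hr1 [HL1 Lip1]]]].
  pose proof (Rmin_l r0 r1). pose proof (Rmin_r r0 r1).
  assert (Hr : 0 < Rmin r0 r1) by (apply Rmin_pos; lra).
  exists (Rmin r0 r1 / 2), (2 * (L0 + L1)). split; [lra|]. split; [lra|].
  intros p q Hp Hq Hpr Hqr Hpq.
  set (bA := rates_A pol p q). set (bB := rates_B pol p q).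
  destruct (rates_between pol p q bA Hpq (or_introl eq_refl)) as [HxA HyA].
  destruct (rates_between pol p q bB Hpq (or_intror eq_refl)) as [HxB HyB].
  assert (SA : in_sq (fst bA) (snd bA)) by (unfold in_sq; lra).
  assert (SB : in_sq (fst bB) (snd bB)) by (unfold in_sq; lra).
  assert (close : forall f rf Lf, lipschitz_near f 0 p0 rf Lf -> Rmin r0 r1 <= rf -> 0 <= Lf ->
    Rabs (f (fst bA) (snd bA) - f (fst bB) (snd bB)) <= 2 * Lf * (q - p)).
  { intros f rf Lf Lip Hrf HLf.
    assert (Hdist : Rabs (fst bA - fst bB) + Rabs (snd bA - snd bB) <= 2 * (q - p))
      by (split_Rabs; lra).
    assert (Hsum : Rabs (f (fst bA) (snd bA) - f (fst bB) (snd bB))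
      <= Lf * (Rabs (fst bA - fst bB) + Rabs (snd bA - snd bB))).
    { apply Lip; auto; split_Rabs; lra. }
    nra. }
  apply dyn_sub_ge; [lra | lra | lra | apply M0, SA | apply M1, SA | |].
  - pose proof (close f0 r0 L0 Lip0 ltac:(lra) HL0). nra.
  - pose proof (close f1 r1 L1 Lip1 ltac:(lra) HL1). nra.
Qed.

Definition right_cont_at (p : R -> R) (u : R) : Prop :=
  forall eps, eps > 0 -> exists delta, delta > 0 /\
    forall s, u <= s < u + delta -> Rabs (p s - p u) < eps.

Lemma continuity_pt_eps (p : R -> R) (u : R) :
  continuity_pt p u -> forall eps, eps > 0 -> exists delta, delta > 0 /\
    forall s, Rabs (s - u) < delta -> Rabs (p s - p u) < eps.
Proof.
  intros Hc eps Heps. destruct (Hc eps Heps) as [delta [Hdelta Hs]].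
  exists delta; split; [exact Hdelta|]. intros s Hsu.
  destruct (Req_dec s u) as [->|Hne].
  - rewrite Rminus_diag, Rabs_R0. lra.
  - apply (Hs s). split; [split; [exact I | auto] | exact Hsu].
Qed.

Lemma right_cont_at_derivable (p : R -> R) (u l : R) :
  derivable_pt_lim p u l -> right_cont_at p u.
Proof.
  intros Hd eps Heps.
  destruct (continuity_pt_eps p u (derivable_continuous_pt p u (exist _ l Hd)) eps Heps)
    as [delta [Hdelta Hs]].
  exists delta; split; [exact Hdelta|]. intros s Hsu. apply Hs. split_Rabs; lra.
Qed.

Lemma right_cont_at_nonneg (p p' : R -> R) :
  right_cont_0 p -> (forall s, 0 < s -> derivable_pt_lim p s (p' s)) ->
  forall u, 0 <= u -> right_cont_at p u.
Proof.
  intros H0 Hd u [Hu | <-]; [exact (right_cont_at_derivable p u (p' u) (Hd u Hu))|].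
  intros eps Heps. destruct (H0 eps Heps) as [delta [Hdelta Hs]].
  exists delta; split; [exact Hdelta|]. intros s Hsu. apply Hs. lra.
Qed.

Lemma right_cont_at_minus (p q : R -> R) (u : R) :
  right_cont_at p u -> right_cont_at q u -> right_cont_at (fun s => p s - q s) u.
Proof.
  intros Hp Hq eps Heps.
  destruct (Hp (eps / 2) ltac:(lra)) as [dp [Hdp Hps]].
  destruct (Hq (eps / 2) ltac:(lra)) as [dq [Hdq Hqs]].
  exists (Rmin dp dq); split; [apply Rmin_pos; lra|]. intros s Hsu.
  pose proof (Rmin_l dp dq). pose proof (Rmin_r dp dq).
  specialize (Hps s ltac:(lra)). specialize (Hqs s ltac:(lra)). split_Rabs; lra.
Qed.

(* [u] is the supremum of the times in [0, t] at which [d] is nonnegative. *)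
Lemma last_zero_before (d : R -> R) (t : R) :
  (forall s, 0 < s -> continuity_pt d s) -> (forall u, 0 <= u -> right_cont_at d u) ->
  0 <= d 0 -> 0 <= t -> d t < 0 ->
  exists u, 0 <= u < t /\ d u = 0 /\ forall s, u < s <= t -> d s < 0.
Proof.
  intros Hcont Hrc H0 Ht Hdt.
  set (E := fun s => 0 <= s <= t /\ 0 <= d s).
  destruct (completeness E) as [u [Hub Hlub]].
  { exists t. intros s Es. apply Es. }
  { exists 0. split; [lra | exact H0]. }
  assert (Hu0 : 0 <= u) by (apply Hub; split; [lra | exact H0]).
  assert (Hut : u <= t) by (apply Hlub; intros s Es; apply Es).
  assert (Hafter : forall s, u < s <= t -> d s < 0).
  { intros s Hs. apply Rnot_le_lt. intros Hds.
    assert (Hsu : s <= u) by (apply Hub; split; [lra | exact Hds]). lra. }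
  assert (Hdu_ge : 0 <= d u).
  { apply Rnot_lt_le. intros Hdu.
    destruct Hu0 as [Hu0 | <-]; [|lra].
    destruct (continuity_pt_eps d u (Hcont u Hu0) (- d u) ltac:(lra)) as [delta [Hdelta Hs]].
    assert (Hub' : is_upper_bound E (u - delta / 2)).
    { intros s [Hst Hds]. apply Rnot_lt_le. intros Hs'.
      assert (Hsu : s <= u) by (apply Hub; split; [exact Hst | exact Hds]).
      specialize (Hs s ltac:(split_Rabs; lra)). split_Rabs; lra. }
    pose proof (Hlub _ Hub'). lra. }
  assert (Hut' : u < t) by (destruct Hut as [h | ->]; [exact h | lra]).
  assert (Hdu_le : d u <= 0).
  { apply Rnot_lt_le. intros Hdu.
    destruct (Hrc u Hu0 (d u) Hdu) as [delta [Hdelta Hs]].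
    set (s := u + Rmin delta (t - u) / 2).
    pose proof (Rmin_l delta (t - u)). pose proof (Rmin_r delta (t - u)).
    assert (0 < Rmin delta (t - u)) by (apply Rmin_pos; lra).
    specialize (Hs s ltac:(unfold s; lra)). specialize (Hafter s ltac:(unfold s; lra)).
    split_Rabs; lra. }
  exists u. split; [lra|]. split; [lra | exact Hafter].
Qed.

Lemma derivable_pt_lim_exp_affine (L u s : R) :
  derivable_pt_lim (fun s => exp (L * (s - u))) s (exp (L * (s - u)) * L).
Proof.
  apply (derivable_pt_lim_comp (fun s => L * (s - u)) exp).
  - pose proof (derivable_pt_lim_scal (id - fct_cte u)%F L s (1 - 0)
      (derivable_pt_lim_minus _ _ s 1 0 (derivable_pt_lim_id s) (derivable_pt_lim_const u s))) as H.
    rewrite Rminus_0_r, Rmult_1_r in H. exact H.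
  - apply derivable_pt_lim_exp.
Qed.

(* Gronwall: [d s * exp (- L * (s - u))] is nondecreasing on (u, t] and tends
   to [d u = 0] at [u]. *)
Lemma nonneg_of_deriv_ge_lin (d d' : R -> R) (u t L : R) :
  u < t -> 0 <= L -> right_cont_at d u -> d u = 0 ->
  (forall s, u < s <= t -> derivable_pt_lim d s (d' s)) ->
  (forall s, u < s <= t -> d' s >= L * d s) ->
  0 <= d t.
Proof.
  intros Hut HL Hrc Hdu Hd Hd'.
  set (g := fun s => exp (- L * (s - u))).
  set (e := fun s => d s * g s).
  set (e' := fun s => d' s * g s + d s * (g s * - L)).
  assert (Hg : forall s, u <= s -> 0 < g s <= 1).
  { intros s Hs. unfold g. split; [apply exp_pos|]. rewrite <- exp_0.
    destruct (Req_dec (- L * (s - u)) 0) as [-> | Hne]; [lra|].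
    left. apply exp_increasing. nra. }
  assert (Hmono : forall a, u < a < t -> e a <= e t).
  { intros a Ha.
    destruct (MVT_cor2 e e' a t ltac:(lra)) as [z [Hz Hzin]].
    { intros c Hc. apply derivable_pt_lim_mult;
        [apply Hd; lra | apply derivable_pt_lim_exp_affine]. }
    pose proof (Hd' z ltac:(lra)). pose proof (Hg z ltac:(lra)).
    assert (e' z >= 0) by (unfold e'; nra). nra. }
  assert (Het : 0 <= e t).
  { apply Rnot_lt_le. intros Het.
    destruct (Hrc (- e t) ltac:(lra)) as [delta [Hdelta Hs]].
    set (a := u + Rmin delta (t - u) / 2).
    pose proof (Rmin_l delta (t - u)). pose proof (Rmin_r delta (t - u)).
    assert (0 < Rmin delta (t - u)) by (apply Rmin_pos; lra).
    specialize (Hs a ltac:(unfold a; lra)). rewrite Hdu, Rminus_0_r in Hs.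
    pose proof (Hmono a ltac:(unfold a; lra)). pose proof (Hg a ltac:(unfold a; lra)).
    unfold e in *. split_Rabs; nra. }
  pose proof (Hg t ltac:(lra)). unfold e in Het. nra.
Qed.

Lemma nonneg_preserved (d d' : R -> R) :
  (forall s, 0 < s -> derivable_pt_lim d s (d' s)) ->
  (forall u, 0 <= u -> right_cont_at d u) ->
  0 <= d 0 ->
  (forall u, 0 <= u -> d u = 0 -> exists delta L, delta > 0 /\ 0 <= L /\
     forall s, u < s < u + delta -> d s < 0 -> d' s >= L * d s) ->
  forall t, 0 <= t -> 0 <= d t.
Proof.
  intros Hd Hrc H0 Hloc t Ht. apply Rnot_lt_le. intros Hdt.
  assert (Hcont : forall s, 0 < s -> continuity_pt d s)
    by (intros s Hs; exact (derivable_continuous_pt d s (exist _ (d' s) (Hd s Hs)))).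
  destruct (last_zero_before d t Hcont Hrc H0 Ht Hdt) as [u [Hu [Hdu Hafter]]].
  destruct (Hloc u (proj1 Hu) Hdu) as [delta [L [Hdelta [HL Hgap]]]].
  pose proof (Rmin_l t (u + delta / 2)). pose proof (Rmin_r t (u + delta / 2)).
  set (t' := Rmin t (u + delta / 2)) in *.
  assert (Hut' : u < t') by (apply Rmin_glb_lt; lra).
  pose proof (Hafter t' ltac:(lra)).
  enough (0 <= d t') by lra.
  apply (nonneg_of_deriv_ge_lin d d' u t' L Hut' HL (Hrc u (proj1 Hu)) Hdu).
  - intros s Hs. apply Hd. lra.
  - intros s Hs. apply Hgap; [lra | apply Hafter; lra].
Qed.

Theorem mainTheorem7 (f0 f1 : R -> R -> R) (pol : policy) (pA pB : R -> R) :
  C1_on_sq f0 -> C1_on_sq f1 ->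
  maps_sq_to_unit f0 -> maps_sq_to_unit f1 ->
  (forall t, 0 <= t -> 0 <= pA t <= 1 /\ 0 <= pB t <= 1) ->
  right_cont_0 pA -> right_cont_0 pB ->
  (forall t, 0 < t ->
     derivable_pt_lim pA t (dyn f0 f1 (pA t) (rates_A pol (pA t) (pB t)))) ->
  (forall t, 0 < t ->
     derivable_pt_lim pB t (dyn f0 f1 (pB t) (rates_B pol (pA t) (pB t)))) ->
  pB 0 <= pA 0 ->
  forall t, 0 <= t -> pB t <= pA t.
Proof.
  intros C0 C1 M0 M1 Hrange RA RB DA DB H0 t Ht.
  set (dA := fun s => dyn f0 f1 (pA s) (rates_A pol (pA s) (pB s))).
  set (dB := fun s => dyn f0 f1 (pB s) (rates_B pol (pA s) (pB s))).
  pose proof (right_cont_at_nonneg pA dA RA DA) as RcA.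
  pose proof (right_cont_at_nonneg pB dB RB DB) as RcB.
  enough (0 <= pA t - pB t) by lra.
  apply (nonneg_preserved (fun s => pA s - pB s) (fun s => dA s - dB s)); [| | lra | | exact Ht].
  - intros s Hs. apply derivable_pt_lim_minus; [apply DA | apply DB]; exact Hs.
  - intros u Hu. apply right_cont_at_minus; [apply RcA | apply RcB]; exact Hu.
  - intros u Hu Htie.
    destruct (dyn_gap_near_tie f0 f1 pol (pA u) C0 C1 M0 M1 (proj1 (Hrange u Hu)))
      as [r [L [Hr [HL Hgap]]]].
    destruct (RcA u Hu r Hr) as [da [Hda Ha]]. destruct (RcB u Hu r Hr) as [db [Hdb Hb]].
    pose proof (Rmin_l da db). pose proof (Rmin_r da db).
    exists (Rmin da db), L. split; [apply Rmin_pos; lra|]. split; [exact HL|].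
    intros s Hs Hneg. destruct (Hrange s ltac:(lra)) as [HpA HpB].
    apply Hgap; [lra | lra | apply Ha; lra | | lra].
    replace (pA u) with (pB u) by lra. apply Hb; lra.
Qed.
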